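(* Let $U,V$ be Banach spaces, $L=L(V,U)$ the space of bounded linear maps with operator norm, $T>0$, $\alpha\in(0,1]$, $\beta\in(0,1]$, and let $F:[0,T]\times C^{\alpha}([0,T],U)\to L$ be non-anticipating and $(\alpha,\beta)$-Hölder continuous with constants $c_{\alpha,\beta},\tilde c_{\alpha,\beta}$. Fix $0\le t_0\le t_1\le T$. Then for every $Y,Z\in C^{\alpha}([0,t_1],U)$, $$\|F(\cdot,Y)\|_{\alpha\beta;[t_0,t_1]}\le c_{\alpha,\beta}\left(1+\|Y\|_{\alpha;[t_0,t_1]}^{\beta}\right).$$ Moreover, if $\|Y\|_{\alpha;[t_0,t_1]}\le R$ and $\|Z\|_{\alpha;[t_0,t_1]}\le R$, then for every $\theta\in(0,1)$, $$\|F(\cdot,Y)-F(\cdot,Z)\|_{\alpha\beta\theta;[t_0,t_1]}\le 2\,\tilde c_{\alpha,\beta}^{1-\theta}c_{\alpha,\beta}^{\theta}(1+R^{\beta})^{\theta}\left(\|Y-Z\|_{\alpha;[0,t_1]}+|Y_0-Z_0|\right)^{\beta(1-\theta)}.$$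
   Context: For a path $Z$ on an interval $I$, $\|Z\|_{\alpha;I}:=\sup_{s,t\in I,s\neq t}|Z_t-Z_s|/|t-s|^{\alpha}$; $C^{\alpha}(I,U)$ denotes paths with finite such seminorm. For $Y\in C([0,T],U)$ and $t\in[0,T]$ put $\mathcal{Y}_t(x):=Y_{t\wedge x}$. $F$ is non-anticipating if $F(t,Y)=F(t,\mathcal{Y}_t)$ for all $t,Y$; for a path $Y$ defined only on $[0,t_1]$ and $t\le t_1$, $F(t,Y)$ means $F(t,\bar Y)$ for any extension $\bar Y\in C^\alpha([0,T],U)$ (e.g. constant after $t_1$), which is well defined by non-anticipation. $F$ is $(\alpha,\beta)$-Hölder continuous if there are constants $c_{\alpha,\beta},\tilde c_{\alpha,\beta}\ge0$ such that for all $Y,\tilde Y\in C^{\alpha}([0,T],U)$ and $s,t\in[0,T]$: $|F(t,Y)-F(s,Y)|\le c_{\alpha,\beta}(1+\|Y\|_{\alpha;[s\wedge t,s\vee t]}^{\beta})|t-s|^{\alpha\beta}$ and $|F(s,Y)-F(s,\tilde Y)|\le\tilde c_{\alpha,\beta}(\|Y-\tilde Y\|_{\alpha;[0,s]}+|Y_0-\tilde Y_0|)^{\beta}$. *)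

From HB Require Import structures.
From mathcomp Require Import all_boot all_order all_algebra.
From mathcomp Require Import all_classical all_reals all_analysis.
Set Implicit Arguments. Unset Strict Implicit. Unset Printing Implicit Defensive.
Import Order.TTheory GRing.Theory Num.Theory.
Import numFieldNormedType.Exports.
Local Open Scope classical_set_scope.
Local Open Scope ring_scope.

Definition Icc {R : realType} (a b : R) : set R := [set x | a <= x <= b].

Definition opnormE {R : realType} {V U : normedModType R} (f : V -> U) : \bar R :=
  ereal_sup [set y : \bar R | exists v : V, `|v| <= 1 /\ y = (`|f v|)%:E].
Definition opnorm {R : realType} {V U : normedModType R} (f : V -> U) : R :=
  fine (opnormE f).

Definition bounded_linear {R : realType} {V U : normedModType R} (f : V -> U) : Prop :=
  (forall (a : R) (u v : V), f (a *: u + v) = a *: f u + f v) /\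
  exists M : R, forall v : V, `|f v| <= M * `|v|.

Definition hsemiE {R : realType} {X : zmodType} (N : X -> R) (a : R) (I : set R)
    (Z : R -> X) : \bar R :=
  ereal_sup [set y : \bar R | exists s t : R,
    I s /\ I t /\ s <> t /\ y = (N (Z t - Z s) / `|t - s| `^ a)%:E].

Definition holder {R : realType} {X : zmodType} (N : X -> R) (a : R) (I : set R)
    (Z : R -> X) : Prop := (hsemiE N a I Z < +oo)%E.

(* real-valued seminorm (meaningful when finite; fine(-oo) = 0 on degenerate intervals) *)
Definition hsemi {R : realType} {X : zmodType} (N : X -> R) (a : R) (I : set R)
    (Z : R -> X) : R := fine (hsemiE N a I Z).

Definition stopped {R : realType} {X : Type} (t : R) (Y : R -> X) : R -> X :=
  fun x => Y (Num.min t x).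

From HB Require Import structures.
From mathcomp Require Import all_boot all_order all_algebra.
From mathcomp Require Import all_classical all_reals all_analysis.
From mathcomp Require Import lra.
Set Implicit Arguments. Unset Strict Implicit. Unset Printing Implicit Defensive.
Import Order.TTheory GRing.Theory Num.Theory.
Import numFieldNormedType.Exports.
Local Open Scope classical_set_scope.
Local Open Scope ring_scope.

(* The stopped path agrees with Y on [t0, t1], so on every subinterval its
   Hoelder seminorm is at most that of Y on [t0, t1]; the time regularity of F
   then gives the first bound.  For the second, the double difference
   F(t,Y) - F(t,Z) - (F(s,Y) - F(s,Z)) is at most 2 c (1 + R^beta) |t-s|^(alpha beta)
   (time regularity along Y and along Z) and at most 2 ct (||Y-Z|| + |Y0-Z0|)^beta
   (dependence on the path at the times t and s); any x <= min(A h^a, B)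
   satisfies x <= A^theta B^(1-theta) h^(a theta). *)

Lemma subset_Icc (R : realType) (a b a' b' : R) :
  a <= a' -> b' <= b -> Icc a' b' `<=` Icc a b.
Proof.
move=> aa' b'b x /andP[a'x xb']; apply/andP.
by split; [exact: le_trans aa' a'x | exact: le_trans xb' b'b].
Qed.

Lemma normB_min_le (R : realType) (r s t : R) :
  `|Num.min r t - Num.min r s| <= `|t - s|.
Proof.
rewrite /Num.min ler_norml.
by case: (ltP r t) => ?; case: (ltP r s) => ?; case: (lerP s t) => ?; lra.
Qed.

Lemma dist_gt0 (R : numDomainType) (s t : R) : s <> t -> 0 < `|t - s|.
Proof. by move=> st; rewrite normr_gt0 subr_eq0; apply/eqP => ts; apply: st. Qed.

Section HolderSeminorm.
Variables (R : realType) (X : zmodType) (N : X -> R) (a : R).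

Lemma hsemiE_le (I : set R) (Z : R -> X) (M : R) :
  (forall s t, I s -> I t -> s <> t -> N (Z t - Z s) <= M * `|t - s| `^ a) ->
  (hsemiE N a I Z <= M%:E)%E.
Proof.
move=> le_M; apply: ge_ereal_sup => _ [s [t [Is [It [st ->]]]]].
by rewrite lee_fin ler_pdivrMr ?powR_gt0 ?dist_gt0 //; apply: le_M.
Qed.

Lemma hsemiE_subset (I J : set R) (Z : R -> X) :
  I `<=` J -> (hsemiE N a I Z <= hsemiE N a J Z)%E.
Proof.
move=> IJ; apply: ereal_sup_le => _ [s [t [Is [It [st ->]]]]].
by exists s, t; split; [exact: IJ | split; [exact: IJ | split]].
Qed.

Lemma holder_subset (I J : set R) (Z : R -> X) :
  I `<=` J -> holder N a J Z -> holder N a I Z.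
Proof. by move=> IJ; apply: le_lt_trans; apply: hsemiE_subset. Qed.

Lemma hsemi_ub (I : set R) (Z : R -> X) (s t : R) :
  holder N a I Z -> I s -> I t -> s <> t ->
  N (Z t - Z s) <= hsemi N a I Z * `|t - s| `^ a.
Proof.
move=> hZ Is It st; rewrite -ler_pdivrMr ?powR_gt0 ?dist_gt0 //.
have : ((N (Z t - Z s) / `|t - s| `^ a)%:E <= hsemiE N a I Z)%E.
  by apply: ereal_sup_ubound; exists s, t.
by move: hZ; rewrite /holder /hsemi; case: (hsemiE N a I Z).
Qed.

Hypothesis N_ge0 : forall x, 0 <= N x.

Lemma hsemi_ge0 (I : set R) (Z : R -> X) : 0 <= hsemi N a I Z.
Proof.
have [[s [t [Is [It st]]]] | no_pair] := pselect (exists s t, I s /\ I t /\ s <> t).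
  apply: fine_ge0.
  have : ((N (Z t - Z s) / `|t - s| `^ a)%:E <= hsemiE N a I Z)%E.
    by apply: ereal_sup_ubound; exists s, t.
  by apply: le_trans; rewrite lee_fin divr_ge0 ?powR_ge0.
suff : hsemiE N a I Z = -oo%E by rewrite /hsemi => ->.
rewrite /hsemiE -(ereal_sup0 R); congr ereal_sup.
apply/seteqP; split=> // y [s [t [Is [It [st _]]]]].
by apply: no_pair; exists s, t.
Qed.

Lemma hsemi_restrict_le (I J : set R) (Z Z' : R -> X) :
  I `<=` J -> (forall x, I x -> Z x = Z' x) -> holder N a J Z' ->
  hsemi N a I Z <= hsemi N a J Z'.
Proof.
move=> IJ ZZ' hZ'; rewrite /hsemi.
have : (hsemiE N a I Z <= (hsemi N a J Z')%:E)%E.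
  apply: hsemiE_le => s t Is It st.
  by rewrite !ZZ' //; apply: hsemi_ub => //; apply: IJ.
by case: (hsemiE N a I Z) => [r| |] //=; rewrite ?lee_fin // => _; apply: hsemi_ge0.
Qed.

End HolderSeminorm.

Section HolderNormed.
Variables (R : realType) (X : normedModType R) (a : R).

Lemma holder_increment_le (I : set R) (Z : R -> X) (s t : R) :
  holder Num.norm a I Z -> I s -> I t ->
  `|Z t - Z s| <= hsemi Num.norm a I Z * `|t - s| `^ a.
Proof.
move=> hZ Is It; have [<-|/eqP st] := eqVneq s t.
  by rewrite subrr normr0 mulr_ge0 ?powR_ge0 ?hsemi_ge0.
exact: hsemi_ub.
Qed.

Lemma holder_stopped (t1 T : R) (Y : R -> X) :
  0 <= a -> 0 <= t1 -> holder Num.norm a (Icc 0 t1) Y ->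
  holder Num.norm a (Icc 0 T) (stopped t1 Y).
Proof.
move=> a_ge0 t1_ge0 hY; rewrite /holder.
apply: (@le_lt_trans _ _ (hsemi Num.norm a (Icc 0 t1) Y)%:E); last exact: ltry.
have stop_in : forall x, Icc 0 T x -> Icc 0 t1 (Num.min t1 x).
  by move=> x /andP[x_ge0 _]; rewrite /Icc /= le_min t1_ge0 x_ge0 ge_min lexx.
apply: hsemiE_le => s t Is It _; rewrite /stopped.
apply: (le_trans (holder_increment_le hY (stop_in _ Is) (stop_in _ It))).
rewrite ler_wpM2l ?hsemi_ge0 //.
by apply: ge0_ler_powR; rewrite ?nnegrE ?normr_ge0 ?normB_min_le.
Qed.

Lemma holderB (I : set R) (Y Z : R -> X) :
  holder Num.norm a I Y -> holder Num.norm a I Z -> holder Num.norm a I (Y - Z).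
Proof.
move=> hY hZ; rewrite /holder.
apply: (@le_lt_trans _ _ (hsemi Num.norm a I Y + hsemi Num.norm a I Z)%:E);
  last exact: ltry.
apply: hsemiE_le => s t Is It st.
have -> : (Y - Z) t - (Y - Z) s = (Y t - Y s) - (Z t - Z s).
  by rewrite /= opprD addrACA -opprD.
by rewrite mulrDl (le_trans (ler_normB _ _)) ?lerD ?holder_increment_le.
Qed.

End HolderNormed.

Section OperatorNorm.
Variables (R : realType) (V U : normedModType R).

Definition op_bounded (f : V -> U) := exists M : R, forall v, `|f v| <= M * `|v|.

Lemma op_boundedB (f g : V -> U) : op_bounded f -> op_bounded g -> op_bounded (f - g).
Proof.
move=> [M fM] [M' gM']; exists (M + M') => v.
by rewrite mulrDl (le_trans (ler_normB _ _)) ?lerD.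
Qed.

Lemma opnorm_ge0 (f : V -> U) : 0 <= opnorm f.
Proof.
rewrite /opnorm; case E: (opnormE f) => [r| |] //=.
have : ((`|f 0|)%:E <= opnormE f)%E.
  by apply: ereal_sup_ubound; exists 0; rewrite normr0 ler01.
by rewrite E lee_fin; apply: le_trans.
Qed.

Lemma opnorm_le (f : V -> U) (M : R) :
  0 <= M -> (forall v, `|v| <= 1 -> `|f v| <= M) -> opnorm f <= M.
Proof.
move=> M_ge0 fM.
have : (opnormE f <= M%:E)%E.
  by apply: ge_ereal_sup => _ [v [v1 ->]]; rewrite lee_fin fM.
by rewrite /opnorm; case: (opnormE f) => [r| |] //=; rewrite lee_fin.
Qed.

Lemma opnorm_ub (f : V -> U) (v : V) :
  op_bounded f -> `|v| <= 1 -> `|f v| <= opnorm f.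
Proof.
move=> [M fM] v1.
have : (opnormE f <= (Num.max M 0)%:E)%E.
  apply: ge_ereal_sup => _ [w [w1 ->]]; rewrite lee_fin.
  have M0 : 0 <= Num.max M 0 by rewrite le_max lexx orbT.
  have MM : M <= Num.max M 0 by rewrite le_max lexx.
  have := fM w; have := normr_ge0 w; nra.
have : ((`|f v|)%:E <= opnormE f)%E by apply: ereal_sup_ubound; exists v.
by rewrite /opnorm; case: (opnormE f).
Qed.

Lemma opnormB_le (f g : V -> U) :
  op_bounded f -> op_bounded g -> opnorm (f - g) <= opnorm f + opnorm g.
Proof.
move=> bf bg; apply: opnorm_le => [|v v1]; first by rewrite addr_ge0 ?opnorm_ge0.
by rewrite (le_trans (ler_normB (f v) (g v))) ?lerD ?opnorm_ub.
Qed.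

End OperatorNorm.

Lemma interpolation_le (R : realType) (x A B h a th : R) :
  0 <= x -> 0 <= A -> 0 <= h -> 0 <= th <= 1 ->
  x <= A * h `^ a -> x <= B ->
  x <= A `^ th * B `^ (1 - th) * h `^ (a * th).
Proof.
move=> x_ge0 A_ge0 h_ge0 /andP[th_ge0 th_le1] xA xB.
have x_split : x = x `^ th * x `^ (1 - th).
  by rewrite -powRD (addrC th) subrK ?oner_eq0 ?powRr1.
have le_th : x `^ th <= A `^ th * h `^ (a * th).
  rewrite powRrM -powRM ?powR_ge0 //.
  by apply: ge0_ler_powR; rewrite ?nnegrE ?mulr_ge0 ?powR_ge0.
have le_1th : x `^ (1 - th) <= B `^ (1 - th).
  apply: ge0_ler_powR; rewrite ?nnegrE ?subr_ge0 //; exact: le_trans xB.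
rewrite x_split mulrAC.
by apply: ler_pM; rewrite ?powR_ge0.
Qed.

Section StoppedPath.
Variables (R : realType) (U V : normedModType R) (T alpha beta c ct : R).
Variable F : R -> (R -> U) -> (V -> U).
Hypotheses (alpha_gt0 : 0 < alpha) (beta_gt0 : 0 < beta).
Hypotheses (c_ge0 : 0 <= c) (ct_ge0 : 0 <= ct).
Hypothesis F_bounded : forall (t : R) (Y : R -> U), 0 <= t <= T ->
  holder Num.norm alpha (Icc 0 T) Y -> op_bounded (F t Y).
Hypothesis F_holder_time : forall (Y : R -> U) (s t : R),
  holder Num.norm alpha (Icc 0 T) Y ->
  0 <= s <= T -> 0 <= t <= T ->
  opnorm (F t Y - F s Y) <=
    c * (1 + hsemi Num.norm alpha (Icc (Num.min s t) (Num.max s t)) Y `^ beta)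
      * `|t - s| `^ (alpha * beta).
Hypothesis F_holder_path : forall (Y Y' : R -> U) (s : R),
  holder Num.norm alpha (Icc 0 T) Y ->
  holder Num.norm alpha (Icc 0 T) Y' -> 0 <= s <= T ->
  opnorm (F s Y - F s Y') <=
    ct * (hsemi Num.norm alpha (Icc 0 s) (Y - Y') + `|Y 0 - Y' 0|) `^ beta.
Variables (t0 t1 : R).
Hypotheses (t0_ge0 : 0 <= t0) (t0_le_t1 : t0 <= t1) (t1_le_T : t1 <= T).

Let Icc_t01_0T : Icc t0 t1 `<=` Icc 0 T := subset_Icc t0_ge0 t1_le_T.

Let holder_stopped_t1 (W : R -> U) :
  holder Num.norm alpha (Icc 0 t1) W ->
  holder Num.norm alpha (Icc 0 T) (stopped t1 W) :=
  holder_stopped T (ltW alpha_gt0) (le_trans t0_ge0 t0_le_t1).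

Lemma F_stopped_increment_le (W : R -> U) (L s t : R) :
  holder Num.norm alpha (Icc 0 t1) W -> hsemi Num.norm alpha (Icc t0 t1) W <= L ->
  Icc t0 t1 s -> Icc t0 t1 t ->
  opnorm (F t (stopped t1 W) - F s (stopped t1 W)) <=
    c * (1 + L `^ beta) * `|t - s| `^ (alpha * beta).
Proof.
move=> hW WL Is It; have /andP[s_t0 s_t1] := Is; have /andP[t_t0 t_t1] := It.
have st_sub : Icc (Num.min s t) (Num.max s t) `<=` Icc t0 t1.
  by apply: subset_Icc; rewrite ?le_min ?ge_max ?s_t0 ?t_t0 ?s_t1 ?t_t1.
apply: (le_trans (F_holder_time (holder_stopped_t1 hW)
                                (Icc_t01_0T Is) (Icc_t01_0T It))).
rewrite ler_wpM2r ?powR_ge0 // ler_wpM2l // lerD2l.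
have L_ge0 : 0 <= L := le_trans (hsemi_ge0 _ (@normr_ge0 _ _) _ _) WL.
apply: (ge0_ler_powR (ltW beta_gt0)); rewrite ?nnegrE ?hsemi_ge0 //.
apply: le_trans WL; apply: (hsemi_restrict_le (@normr_ge0 _ _) st_sub).
- by move=> x /st_sub /andP[_ x_t1]; rewrite /stopped min_r.
- by apply: holder_subset hW; apply: subset_Icc.
Qed.

Lemma F_stopped_gap_le (Y Z : R -> U) (u : R) :
  holder Num.norm alpha (Icc 0 t1) Y -> holder Num.norm alpha (Icc 0 t1) Z ->
  Icc t0 t1 u ->
  opnorm (F u (stopped t1 Y) - F u (stopped t1 Z)) <=
    ct * (hsemi Num.norm alpha (Icc 0 t1) (Y - Z) + `|Y 0 - Z 0|) `^ beta.
Proof.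
move=> hY hZ Iu; have /andP[u_t0 u_t1] := Iu.
apply: (le_trans (F_holder_path (holder_stopped_t1 hY) (holder_stopped_t1 hZ)
                                (Icc_t01_0T Iu))).
rewrite ler_wpM2l //; apply: (ge0_ler_powR (ltW beta_gt0));
  rewrite ?nnegrE ?addr_ge0 ?hsemi_ge0 //.
rewrite /stopped (min_r (le_trans t0_ge0 t0_le_t1)) lerD2r.
apply: (hsemi_restrict_le (@normr_ge0 _ _) _ _ (holderB hY hZ)).
- exact: subset_Icc.
- by move=> x /andP[_ x_u]; rewrite !fctE min_r // (le_trans x_u).
Qed.

Lemma F_stopped_holder (Y : R -> U) :
  holder Num.norm alpha (Icc 0 t1) Y ->
  (hsemiE opnorm (alpha * beta) (Icc t0 t1) (fun t => F t (stopped t1 Y))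
     <= (c * (1 + hsemi Num.norm alpha (Icc t0 t1) Y `^ beta))%:E)%E.
Proof.
move=> hY; apply: hsemiE_le => s t Is It _.
exact: F_stopped_increment_le.
Qed.

Lemma F_stopped_diff_holder (Y Z : R -> U) (Rb th : R) :
  holder Num.norm alpha (Icc 0 t1) Y -> holder Num.norm alpha (Icc 0 t1) Z ->
  hsemi Num.norm alpha (Icc t0 t1) Y <= Rb ->
  hsemi Num.norm alpha (Icc t0 t1) Z <= Rb ->
  0 < th < 1 ->
  (hsemiE opnorm (alpha * beta * th) (Icc t0 t1)
     (fun t => (F t (stopped t1 Y) - F t (stopped t1 Z))%R)
   <= (2 * ct `^ (1 - th) * c `^ th * (1 + Rb `^ beta) `^ th
       * (hsemi Num.norm alpha (Icc 0 t1) (Y - Z) + `|Y 0 - Z 0|)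
           `^ (beta * (1 - th)))%:E)%E.
Proof.
move=> hY hZ YRb ZRb /andP[th_gt0 th_lt1].
set L := 1 + Rb `^ beta.
set d := hsemi Num.norm alpha (Icc 0 t1) (Y - Z) + `|Y 0 - Z 0|.
apply: hsemiE_le => s t Is It _.
have bYs u : Icc t0 t1 u -> op_bounded (F u (stopped t1 Y)).
  by move=> Iu; apply: F_bounded (Icc_t01_0T Iu) (holder_stopped_t1 hY).
have bZs u : Icc t0 t1 u -> op_bounded (F u (stopped t1 Z)).
  by move=> Iu; apply: F_bounded (Icc_t01_0T Iu) (holder_stopped_t1 hZ).
set D := _ - _.
have time_le : opnorm D <= 2 * (c * L) * `|t - s| `^ (alpha * beta).
  rewrite /D opprD addrACA -opprD -mulrA mulr_natl mulr2n.
  apply: le_trans (opnormB_le (op_boundedB (bYs _ It) (bYs _ Is))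
                              (op_boundedB (bZs _ It) (bZs _ Is))) _.
  by rewrite lerD ?F_stopped_increment_le.
have gap_le : opnorm D <= 2 * (ct * d `^ beta).
  rewrite mulr_natl mulr2n.
  apply: le_trans (opnormB_le (op_boundedB (bYs _ It) (bZs _ It))
                              (op_boundedB (bYs _ Is) (bZs _ Is))) _.
  by rewrite lerD ?F_stopped_gap_le.
have two_split : (2 : R) `^ th * 2 `^ (1 - th) = 2.
  by rewrite -powRD (addrC th) subrK ?oner_eq0 ?powRr1.
have L_ge0 : 0 <= L by rewrite addr_ge0 ?powR_ge0.
apply: le_trans (interpolation_le (th := th) _ _ _ _ time_le gap_le) _.
- exact: opnorm_ge0.
- by rewrite !mulr_ge0.
- exact: normr_ge0.
- by rewrite !ltW.
rewrite !powRM ?mulr_ge0 ?powR_ge0 // -powRrM -[in leRHS]two_split.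
lra.
Qed.

End StoppedPath.

Theorem proposition4p10 (R : realType) (U V : completeNormedModType R)
  (T alpha beta c ct : R)
  (F : R -> (R -> U) -> (V -> U))
  (hT : 0 < T) (halpha : 0 < alpha <= 1) (hbeta : 0 < beta <= 1)
  (hc : 0 <= c) (hct : 0 <= ct)
  (* F is a map on [0,T] x C^alpha([0,T],U): it only sees paths on [0,T] *)
  (Fdom : forall (t : R) (Y Y' : R -> U),
     (forall x, 0 <= x <= T -> Y x = Y' x) -> F t Y = F t Y')
  (* F takes values in L(V,U) *)
  (Flin : forall (t : R) (Y : R -> U), 0 <= t <= T ->
     holder Num.norm alpha (Icc 0 T) Y -> bounded_linear (F t Y))
  (* non-anticipating *)
  (Fna : forall (t : R) (Y : R -> U), 0 <= t <= T ->
     holder Num.norm alpha (Icc 0 T) Y -> F t Y = F t (stopped t Y))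
  (* (alpha,beta)-Hoelder continuity *)
  (FH1 : forall (Y : R -> U) (s t : R), holder Num.norm alpha (Icc 0 T) Y ->
     0 <= s <= T -> 0 <= t <= T ->
     opnorm (F t Y - F s Y) <=
       c * (1 + hsemi Num.norm alpha (Icc (Num.min s t) (Num.max s t)) Y `^ beta)
         * `|t - s| `^ (alpha * beta))
  (FH2 : forall (Y Y' : R -> U) (s : R), holder Num.norm alpha (Icc 0 T) Y ->
     holder Num.norm alpha (Icc 0 T) Y' -> 0 <= s <= T ->
     opnorm (F s Y - F s Y') <=
       ct * (hsemi Num.norm alpha (Icc 0 s) (Y - Y') + `|Y 0 - Y' 0|) `^ beta)
  (t0 t1 : R) (ht01 : 0 <= t0 <= t1) (ht1T : t1 <= T)
  (Y Z : R -> U)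
  (hY : holder Num.norm alpha (Icc 0 t1) Y) (hZ : holder Num.norm alpha (Icc 0 t1) Z) :
  (hsemiE opnorm (alpha * beta) (Icc t0 t1) (fun t => F t (stopped t1 Y))
     <= (c * (1 + hsemi Num.norm alpha (Icc t0 t1) Y `^ beta))%:E)%E
  /\
  (forall Rb theta : R,
     hsemi Num.norm alpha (Icc t0 t1) Y <= Rb ->
     hsemi Num.norm alpha (Icc t0 t1) Z <= Rb ->
     0 < theta < 1 ->
     (hsemiE opnorm (alpha * beta * theta) (Icc t0 t1)
        (fun t => (F t (stopped t1 Y) - F t (stopped t1 Z))%R)
      <= (2 * ct `^ (1 - theta) * c `^ theta * (1 + Rb `^ beta) `^ theta
          * (hsemi Num.norm alpha (Icc 0 t1) (Y - Z) + `|Y 0 - Z 0|)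
              `^ (beta * (1 - theta)))%:E)%E).
Proof.
move: halpha hbeta ht01 => /andP[alpha_gt0 _] /andP[beta_gt0 _] /andP[t0_ge0 t0_le_t1].
have F_bounded t W ht hW : op_bounded (F t W) := (Flin t W ht hW).2.
split; first exact: (F_stopped_holder alpha_gt0 beta_gt0 hc FH1 t0_ge0 t0_le_t1 ht1T).
move=> Rb th; apply: (F_stopped_diff_holder alpha_gt0 beta_gt0 hc hct F_bounded FH1 FH2
                        t0_ge0 t0_le_t1 ht1T hY hZ).
Qed.
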